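(* Let $\Gamma$ be a variation of FSSP that has a solution. Then $\Gamma$ has a minimal-time solution if and only if there is a constant $c$ such that $\mathrm{mss}_\Gamma(C)\le c$ for every configuration $C$ of $\Gamma$.
   Context: Fix $k\ge1$; positions are elements of $\mathbb{Z}^k$, and with $\epsilon_0,\dots,\epsilon_{2k-1}$ the vectors $\pm e_1,\dots,\pm e_k$ in a fixed order, $\mathrm{bc}_C(p)\in\{0,1\}^{2k}$ has $i$-th entry $1$ iff $p+\epsilon_i\in C$. A variation $\Gamma$ of FSSP is specified by a set of configurations, each a finite set of positions containing the origin (the general). Firing squad model (boundary-sensitive): a finite automaton $A$ has a finite state set with quiescent state $\mathrm{Q}$, general states $\mathrm{G}_0,\dots,\mathrm{G}_{m-1}$, firing states $\mathcal F\not\ni\mathrm{Q}$, a map $\tau:\{0,1\}^{2k}\to\{0,\dots,m-1\}$ and a transition function from the current state and the $2k$ neighbour states ($\#$ where no node), with $\mathrm{Q}$ stable when all inputs lie in $\{\mathrm{Q},\#\}$. With a copy of $A$ at each position of a configuration $C$, at time $0$ the origin is in $\mathrm{G}_{\tau(\mathrm{bc}_C(\text{origin}))}$ and all other nodes in $\mathrm{Q}$; nodes update synchronously. $A$ is a solution of $\Gamma$ if for every configuration $C$ of $\Gamma$ there is a time $t_C$ such that no node is in $\mathcal F$ before $t_C$ and all nodes are in $\mathcal F$ at $t_C$; write $\mathrm{ft}(C,A)=t_C$. $\mathrm{mft}_\Gamma(C)=\min_A\mathrm{ft}(C,A)$ over all solutions $A$. A minimal-time solution is a solution $\tilde A$ with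 $\mathrm{ft}(C,\tilde A)=\mathrm{mft}_\Gamma(C)$ for every configuration $C$ (equivalently, $\mathrm{ft}(C,\tilde A)\le\mathrm{ft}(C,A)$ for all solutions $A$ and all $C$). $\mathrm{mss}_\Gamma(C)$ is the minimum number of states of a solution $A$ of $\Gamma$ with $\mathrm{ft}(C,A)=\mathrm{mft}_\Gamma(C)$. *)

From HB Require Import structures.
From mathcomp Require Import all_boot all_order all_algebra.
From mathcomp Require Import finmap boolp.
Set Implicit Arguments. Unset Strict Implicit. Unset Printing Implicit Defensive.
Import GRing.Theory Num.Theory.
Local Open Scope ring_scope.


Definition pos (k : nat) := {ffun 'I_k -> int}.

Definition origin (k : nat) : pos k := [ffun _ => 0].
Definition padd (k : nat) (p q : pos k) : pos k := [ffun i => p i + q i].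

(* The 2k unit vectors eps_j, j : 'I_(k+k), in the fixed order
   eps_j = + e_j for j < k and eps_(k+i) = - e_i. *)
Definition eps (k : nat) (j : 'I_(k + k)) : pos k :=
  [ffun i => match split j with
             | inl a => if i == a then 1 else 0
             | inr a => if i == a then -1 else 0
             end].

Definition config (k : nat) := {fset pos k}.

Definition bc (k : nat) (C : config k) (p : pos k) : {ffun 'I_(k + k) -> bool} :=
  [ffun j => padd p (eps j) \in C].

Definition variation (k : nat) (Gam : config k -> Prop) : Prop :=
  forall C, Gam C -> origin k \in C.

(* Boundary-sensitive firing squad automata.  Neighbour inputs are given as a
   finite function 'I_(k+k) -> option St, where None stands for '#'. *)
Record automaton (k : nat) := Automaton {
  St : finType;
  Qst : St;
  ngen : nat;
  gen : 'I_ngen -> St;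
  fire : {set St};
  tau : {ffun 'I_(k + k) -> bool} -> 'I_ngen;
  delta : St -> {ffun 'I_(k + k) -> option St} -> St;
  Q_notin_fire : Qst \notin fire;
  Q_stable : forall nb : {ffun 'I_(k + k) -> option St},
      (forall j, (nb j == None) || (nb j == Some Qst)) -> delta Qst nb = Qst
}.

(* run A C t p : state of the node at position p at time t (meaningful for p \in C) *)
Fixpoint run (k : nat) (A : automaton k) (C : config k) (t : nat) (p : pos k)
  : St A :=
  match t with
  | 0 => if p == origin k then @gen _ A (@tau _ A (bc C (origin k))) else Qst A
  | t'.+1 => @delta _ A (run A C t' p)
               [ffun j => if padd p (eps j) \in C
                          then Some (run A C t' (padd p (eps j))) else None]
  end.

Definition fires_at (k : nat) (A : automaton k) (C : config k) (t : nat) : Prop :=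
  (forall t', (t' < t)%N -> forall p, p \in C -> run A C t' p \notin @fire _ A) /\
  (forall p, p \in C -> run A C t p \in @fire _ A).

Definition is_solution (k : nat) (Gam : config k -> Prop) (A : automaton k) : Prop :=
  forall C, Gam C -> exists t, fires_at A C t.

(* Minimum of a set of naturals (0 if empty). *)
Lemma pmin_ex (P : nat -> Prop) : (exists n, P n) -> exists n, `[< P n >].
Proof. by case=> n Pn; exists n; apply/asboolP. Qed.

Definition pmin (P : nat -> Prop) : nat :=
  match pselect (exists n, P n) with
  | left h => ex_minn (pmin_ex h)
  | right _ => 0%N
  end.

Definition mft (k : nat) (Gam : config k -> Prop) (C : config k) : nat :=
  pmin (fun t => exists A : automaton k, is_solution Gam A /\ fires_at A C t).

Definition minimal_time_solution (k : nat) (Gam : config k -> Prop)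
  (A : automaton k) : Prop :=
  is_solution Gam A /\ forall C, Gam C -> fires_at A C (mft Gam C).

Definition mss (k : nat) (Gam : config k -> Prop) (C : config k) : nat :=
  pmin (fun n => exists A : automaton k,
           [/\ is_solution Gam A, fires_at A C (mft Gam C) & #|St A| = n]).

From HB Require Import structures.
From mathcomp Require Import all_boot all_order all_algebra.
From mathcomp Require Import finmap boolp.
Set Implicit Arguments. Unset Strict Implicit. Unset Printing Implicit Defensive.

(** A minimal-time solution [A] gives [mss C <= #|St A|] for every [C].
    Conversely, suppose [mss] is bounded by [c]. Up to renaming of states, an
    automaton with at most [c] states is one of finitely many codes over 'I_c
    (quiescent state, firing set, initial state of the general for each
    boundary condition, transition table). Run all codes that are solutions
    in parallel and fire as soon as one component fires. No component fires
    before [mft C], since each is a solution; and a solution with [mss C]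
    states firing at [mft C] is among the components. *)

Lemma pmin_le (P : nat -> Prop) n : P n -> (pmin P <= n)%N.
Proof.
move=> Pn; rewrite /pmin; case: pselect => // h.
by case: ex_minnP => m _; apply; apply/asboolP.
Qed.

Lemma pmin_mem (P : nat -> Prop) : (exists n, P n) -> P (pmin P).
Proof.
move=> ex; rewrite /pmin; case: pselect => // h.
by case: ex_minnP => m /asboolP.
Qed.

Section MinimalTime.
Variables (k : nat) (Gam : config k -> Prop).
Hypothesis solvable : exists A : automaton k, is_solution Gam A.

Lemma mft_le (A : automaton k) C t :
  is_solution Gam A -> fires_at A C t -> (mft Gam C <= t)%N.
Proof. by move=> solA fireA; apply: pmin_le; exists A. Qed.

Lemma mft_attained C : Gam C ->
  exists A : automaton k, is_solution Gam A /\ fires_at A C (mft Gam C).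
Proof.
move=> GC; apply: (pmin_mem (P := fun t => exists A : automaton k,
  is_solution Gam A /\ fires_at A C t)).
have [A solA] := solvable.
by have [t fireA] := solA C GC; exists t, A.
Qed.

Lemma mss_attained C : Gam C ->
  exists A : automaton k,
    [/\ is_solution Gam A, fires_at A C (mft Gam C) & #|St A| = mss Gam C].
Proof.
move=> GC; apply: (pmin_mem (P := fun n => exists A : automaton k,
  [/\ is_solution Gam A, fires_at A C (mft Gam C) & #|St A| = n])).
by have [A [solA fireA]] := mft_attained GC; exists #|St A|, A.
Qed.

End MinimalTime.

Section Automata.
Variable k : nat.
Local Notation BC := {ffun 'I_(k + k) -> bool}.
Local Notation input S := {ffun 'I_(k + k) -> option S}.

Definition init_state (A : automaton k) (b : BC) : St A := @gen k A (tau A b).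

Section Morphism.
Variables (A B : automaton k) (f : St A -> St B).
Hypothesis f_Q : f (Qst A) = Qst B.
Hypothesis f_init : forall b, f (init_state A b) = init_state B b.
Hypothesis f_delta : forall s (nb : input (St A)),
  f (delta s nb) = delta (f s) [ffun j => omap f (nb j)].

Lemma run_morph C t p : run B C t p = f (run A C t p).
Proof.
elim: t p => [|t IH] p /=; first by case: ifP => _; rewrite ?f_init.
rewrite f_delta IH; congr delta; apply/ffunP => j; rewrite !ffunE.
by case: ifP => // _; rewrite IH.
Qed.

Hypothesis f_fire : forall s, (f s \in fire B) = (s \in fire A).

Lemma fires_at_morph C t : fires_at B C t <-> fires_at A C t.
Proof.
have E t' p : (run B C t' p \in fire B) = (run A C t' p \in fire A).
  by rewrite run_morph f_fire.
split=> -[early now]; split=> [t' lt_t' p pC|p pC].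
- by rewrite -E; apply: early.
- by rewrite -E; apply: now.
- by rewrite E; apply: early.
- by rewrite E; apply: now.
Qed.

End Morphism.

Section BcAutomaton.
Variables (S : finType) (Q : S) (G : BC -> S) (F : {set S}).
Variable D : S -> input S -> S.
Hypothesis Q_notin_F : Q \notin F.
Hypothesis D_stable : forall nb : input S,
  (forall j, (nb j == None) || (nb j == Some Q)) -> D Q nb = Q.

Definition bc_automaton : automaton k :=
  @Automaton k S Q #|{: BC}| (fun i => G (enum_val i)) F enum_rank D
    Q_notin_F D_stable.

Lemma init_bc_automaton b : init_state bc_automaton b = G b.
Proof. by rewrite /init_state /= enum_rankK. Qed.

End BcAutomaton.

Section Product.
Variables (I : finType) (A : I -> automaton k).
Local Notation S := {dffun forall i, St (A i)}.

Definition prod_Q : S := [ffun i => Qst (A i)].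
Definition prod_fire : {set S} :=
  [set s : S | [exists i, s i \in fire (A i)]].
Definition prod_delta (s : S) (nb : input S) : S :=
  [ffun i => delta (s i) [ffun j => omap (fun x : S => x i) (nb j)]].

Lemma prod_Q_notin_fire : prod_Q \notin prod_fire.
Proof.
by rewrite inE negb_exists; apply/forallP => i; rewrite ffunE Q_notin_fire.
Qed.

Lemma prod_delta_stable (nb : input S) :
  (forall j, (nb j == None) || (nb j == Some prod_Q)) ->
  prod_delta prod_Q nb = prod_Q.
Proof.
move=> Qnb; apply/ffunP => i; rewrite !ffunE Q_stable // => j.
by rewrite ffunE; case/orP: (Qnb j) => /eqP -> //=; rewrite ffunE eqxx.
Qed.

Definition prod_automaton : automaton k :=
  bc_automaton (fun b => [ffun i => init_state (A i) b] : S)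
    prod_Q_notin_fire prod_delta_stable.

Lemma run_prod_automaton i C t p :
  run prod_automaton C t p i = run (A i) C t p.
Proof.
rewrite (@run_morph prod_automaton (A i) (fun s : S => s i)) // => [|b|s nb].
- by rewrite ffunE.
- by rewrite init_bc_automaton ffunE.
- by rewrite /= ffunE.
Qed.

Lemma minimal_time_prod_automaton (Gam : config k -> Prop) :
  (forall i, is_solution Gam (A i)) ->
  (forall C, Gam C -> exists i, fires_at (A i) C (mft Gam C)) ->
  minimal_time_solution Gam prod_automaton.
Proof.
move=> solA fastA.
suff fast C : Gam C -> fires_at prod_automaton C (mft Gam C).
  by split=> // C /fast; exists (mft Gam C).
move=> GC; have [i [_ fire_i]] := fastA C GC; split=> [t lt_t p pC|p pC].
- rewrite inE negb_exists; apply/forallP => j; rewrite run_prod_automaton.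
  have [tj fire_j] := solA j C GC.
  exact: fire_j.1 t (leq_trans lt_t (mft_le (solA j) fire_j)) p pC.
- by rewrite inE; apply/existsP; exists i; rewrite run_prod_automaton fire_i.
Qed.

End Product.

Section Codes.
Variable n : nat.
Local Notation T := 'I_n.

Definition code := (T * {set T} * {ffun BC -> T} * {ffun T * input T -> T})%type.

Definition code_delta (Q : T) (D : {ffun T * input T -> T}) s (nb : input T) :=
  if (s == Q) && [forall j, (nb j == None) || (nb j == Some Q)] then Q
  else D (s, nb).

Lemma code_delta_stable Q D (nb : input T) :
  (forall j, (nb j == None) || (nb j == Some Q)) -> code_delta Q D Q nb = Q.
Proof. by move=> Qnb; rewrite /code_delta eqxx; case: forallP. Qed.

(* Quiescent stability and [Q \notin F] are enforced rather than assumed, so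
   that every code denotes an automaton; on the code of an actual automaton
   this changes nothing. *)
Definition code_automaton (d : code) : automaton k :=
  let: (Q, F, G, D) := d in
  bc_automaton G (negbT (setD11 Q F)) (@code_delta_stable Q D).

Section Encoding.
Variables (A : automaton k) (le_A_n : (#|St A| <= n)%N).

Definition encode (s : St A) : T := widen_ord le_A_n (enum_rank s).

Lemma encode_inj : injective encode.
Proof.
by move=> s s' /(congr1 val) val_eq; apply: enum_rank_inj; apply: val_inj.
Qed.

Definition decode (i : T) : St A := odflt (Qst A) [pick s | encode s == i].

Lemma encodeK : cancel encode decode.
Proof.
move=> s; rewrite /decode; case: pickP => [s' /eqP/encode_inj -> //|/(_ s)].
by rewrite eqxx.
Qed.

Definition code_of_automaton : code :=
  (encode (Qst A), encode @: fire A, [ffun b => encode (init_state A b)],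
   [ffun x : T * input T =>
      encode (delta (decode x.1) [ffun j => omap decode (x.2 j)])]).

Lemma fires_at_code_of_automaton C t :
  fires_at (code_automaton code_of_automaton) C t <-> fires_at A C t.
Proof.
apply: (@fires_at_morph A (code_automaton code_of_automaton) encode)
  => // [b|s nb|s].
- by rewrite init_bc_automaton ffunE.
- have decode_input :
    [ffun j => omap decode ([ffun j => omap encode (nb j)] j)] = nb.
    by apply/ffunP => j; rewrite !ffunE; case: (nb j) => //= x; rewrite encodeK.
  rewrite /= /code_delta ffunE /= (inj_eq encode_inj) encodeK decode_input.
  case: eqVneq => [->|] //=; case: forallP => // Qnb; rewrite Q_stable // => j.
  move: (Qnb j); rewrite ffunE; case: (nb j) => //= x.
  by rewrite !(inj_eq Some_inj) (inj_eq encode_inj).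
- rewrite /= in_setD1 (inj_eq encode_inj) mem_imset; last exact: encode_inj.
  by have [->|//] := eqVneq s (Qst A); rewrite (negbTE (Q_notin_fire A)).
Qed.

End Encoding.
End Codes.
End Automata.

Theorem theorem18 (k : nat) (hk : (0 < k)%N) (Gam : config k -> Prop)
  (hGam : variation Gam)
  (hsol : exists A : automaton k, is_solution Gam A) :
  (exists A : automaton k, minimal_time_solution Gam A) <->
  (exists c : nat, forall C, Gam C -> (mss Gam C <= c)%N).
Proof.
split=> [[A [solA fastA]]|[c mss_le_c]].
  exists #|St A| => C GC; apply: pmin_le.
  by exists A; split => //; apply: fastA.
pose I := {d : code k c | `[< is_solution Gam (code_automaton d) >]}.
exists (prod_automaton (fun i : I => code_automaton (val i))).
apply: minimal_time_prod_automaton => [i|C GC]; first exact/asboolP/(valP i).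
have [A [solA fastA cardA]] := mss_attained hsol GC.
have le_A_c : (#|St A| <= c)%N by rewrite cardA mss_le_c.
have code_equiv := fires_at_code_of_automaton le_A_c.
have sol_code :
    `[< is_solution Gam (code_automaton (code_of_automaton le_A_c)) >].
  by apply/asboolP => C' /solA [t fire_t]; exists t; apply/code_equiv.
by exists (exist _ (code_of_automaton le_A_c) sol_code); apply/code_equiv.
Qed.
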